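(* Let $K$ be a field with a derivation $\partial$, and let $K[D]$ be the ring of ordinary linear differential operators over $K$ ($D\circ a=aD+\partial(a)$ for $a\in K$). Let $L\in K[D]$ have symbol $\operatorname{Sym}_L=S_1S_2$, where $S_1,S_2\in K[X]$ are homogeneous of degrees $d_1,d_2$. Then every partial factorization of $L$ of order $\max(d_1,d_2)-1$ and type $(S_1)(S_2)$ has at most one extension to a factorization $L=F_1'\circ F_2'$ of type $(S_1)(S_2)$.
   Context: For $L=\sum_{j\le d}a_jD^j$ with $a_j\in K$ and $a_d\neq0$, $\operatorname{ord}(L)=d$ (with $\operatorname{ord}(0)=-\infty$) and $\operatorname{Sym}_L=a_dX^d$. A factorization of type $(S_1)(S_2)$ is $L=F_1\circ F_2$ with $\operatorname{Sym}_{F_i}=S_i$. For $t\in\{0,\dots,\operatorname{ord}L\}$, a partial factorization of order $t$ and type $(S_1)(S_2)$ is a composition $F_1\circ F_2$ with $\operatorname{Sym}_{F_i}=S_i$ and $\operatorname{ord}(L-F_1\circ F_2)<t$. A partial factorization $F_1'\circ F_2'$ of order $t'<t$ is an extension of one $F_1\circ F_2$ of order $t$ if $\operatorname{ord}(F_i-F_i')<t-(d-d_i)$ for $i=1,2$, where $d=\operatorname{ord}L$. A factorization is a partial factorization of order $0$. *)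

From HB Require Import structures.
From mathcomp Require Import all_boot all_order all_algebra.
Set Implicit Arguments. Unset Strict Implicit. Unset Printing Implicit Defensive.
Import Order.TTheory GRing.Theory Num.Theory.
Local Open Scope ring_scope.

(* Operators L = \sum_j a_j D^j in K[D] are represented by their coefficient
   sequence, i.e. by the polynomial \sum_j a_j 'X^j : {poly K}.  The additive
   structure of K[D] is that of {poly K}; the multiplication (composition) is
   the twisted one, given by the Leibniz rule
     D^i o b = \sum_(k <= i) 'C(i,k) der^k(b) D^(i-k),
   which is forced by D o a = a D + der a. *)

Section DiffOps.
Variable K : fieldType.

Definition is_derivation (der : K -> K) : Prop :=
  (forall a b, der (a + b) = der a + der b) /\
  (forall a b, der (a * b) = der a * b + a * der b).

Definition dcomp (der : K -> K) (A B : {poly K}) : {poly K} :=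
  \sum_(i < size A) \sum_(j < size B) \sum_(k < i.+1)
     (A`_i * ('C(i, k))%:R * iter k der B`_j) *: 'X^(i - k + j).

(* ord L = size L - 1, with ord 0 = -oo; as an extended integer. *)
(* ord_lt L t  <->  ord L < t   (t : int) *)
Definition ord_lt (L : {poly K}) (t : int) : bool :=
  (L == 0) || ((size L)%:Z <= t).

(* ord L as an integer, meaningful for L != 0 *)
Definition ordz (L : {poly K}) : int := ((size L).-1)%:Z.

Definition dsym (L : {poly K}) : {poly K} := lead_coef L *: 'X^((size L).-1).

Definition homog_of_deg (S : {poly K}) (d : nat) : Prop :=
  exists2 c : K, c != 0 & S = c *: 'X^d.

Definition partial_fact (der : K -> K) (L S1 S2 : {poly K}) (t : int)
    (F1 F2 : {poly K}) : Prop :=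
  [/\ 0 <= t <= ordz L, dsym F1 = S1, dsym F2 = S2
    & ord_lt (L - dcomp der F1 F2) t].

Definition factorization (der : K -> K) (L S1 S2 F1 F2 : {poly K}) : Prop :=
  partial_fact der L S1 S2 0 F1 F2.

(* (G1,G2) of order t' is an extension of (F1,F2) of order t; here
   d = ord L and d_i = ord F_i = deg S_i. *)
Definition extension (der : K -> K) (L S1 S2 : {poly K})
    (t : int) (F1 F2 : {poly K}) (t' : int) (G1 G2 : {poly K}) : Prop :=
  [/\ partial_fact der L S1 S2 t F1 F2, t' < t,
      partial_fact der L S1 S2 t' G1 G2,
      ord_lt (F1 - G1) (t - (ordz L - ordz F1))
    & ord_lt (F2 - G2) (t - (ordz L - ordz F2))].

End DiffOps.

From HB Require Import structures.
From mathcomp Require Import all_boot all_order all_algebra.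
From mathcomp Require Import zify.
Set Implicit Arguments. Unset Strict Implicit. Unset Printing Implicit Defensive.
Import Order.TTheory GRing.Theory Num.Theory.
Local Open Scope ring_scope.

(* Since max(d1,d2) - 1 - d_j < 0 for the index j of the larger degree, the
   allowed error ord(F_i - F_i') < t - d_j forces the factor of the other index
   i to be the same in every extension.  The remaining factor is then unique
   because K[D] has no zero divisors: its leading coefficients multiply. *)

Lemma derivation_morphB (K : fieldType) (der : K -> K) :
  is_derivation der -> {morph der : a b / a - b}.
Proof. by case=> derD _ a b; rewrite -{2}(subrK b a) (derD (a - b) b) addrK. Qed.

Lemma iter_morphB (V : zmodType) (f : V -> V) k :
  {morph f : a b / a - b} -> {morph iter k f : a b / a - b}.
Proof. by move=> fB; elim: k => [|k IHk] a b //=; rewrite IHk fB. Qed.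

Section Composition.
Variables (K : fieldType) (der : K -> K).

Definition dcomp_term (A B : {poly K}) (i j k : nat) : {poly K} :=
  (A`_i * ('C(i, k))%:R * iter k der B`_j) *: 'X^(i - k + j).

Hypothesis derB : {morph der : a b / a - b}.

Lemma iter_der0 k : iter k der 0 = 0.
Proof. by have := iter_morphB k derB 0 0; rewrite !subrr. Qed.

Lemma dcomp_widen (A B : {poly K}) nA nB :
  (size A <= nA)%N -> (size B <= nB)%N ->
  dcomp der A B = \sum_(i < nA) \sum_(j < nB) \sum_(k < i.+1) dcomp_term A B i j k.
Proof.
move=> hA hB; rewrite /dcomp (big_ord_widen nA (fun i => \sum_(j < size B)
  \sum_(k < i.+1) dcomp_term A B i j k) hA) big_mkcond /=.
apply: eq_bigr => i _; case: ifP => hi; last first.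
  rewrite big1 // => j _; rewrite big1 // => k _.
  by rewrite /dcomp_term nth_default ?mul0r ?scale0r // leqNgt hi.
rewrite (big_ord_widen nB (fun j => \sum_(k < i.+1) dcomp_term A B i j k) hB).
rewrite big_mkcond /=; apply: eq_bigr => j _; case: ifP => hj //.
rewrite big1 // => k _.
by rewrite /dcomp_term [B`_j]nth_default ?iter_der0 ?mulr0 ?scale0r // leqNgt hj.
Qed.

Lemma dcompBl (A C B : {poly K}) :
  dcomp der (A - C) B = dcomp der A B - dcomp der C B.
Proof.
set n := maxn (size A) (size C).
have hA : (size A <= n)%N by rewrite leq_maxl.
have hC : (size C <= n)%N by rewrite leq_maxr.
have hAC : (size (A - C)%R <= n)%N.
  by rewrite (leq_trans (size_polyD _ _)) // size_polyN geq_max hA hC.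
rewrite (dcomp_widen hAC (leqnn _)) (dcomp_widen hA (leqnn _)).
rewrite (dcomp_widen hC (leqnn _)) -sumrB; apply: eq_bigr => i _.
rewrite -sumrB; apply: eq_bigr => j _; rewrite -sumrB; apply: eq_bigr => k _.
by rewrite /dcomp_term coefB -scalerBl !mulrBl.
Qed.

Lemma dcompBr (A B C : {poly K}) :
  dcomp der A (B - C) = dcomp der A B - dcomp der A C.
Proof.
set n := maxn (size B) (size C).
have hB : (size B <= n)%N by rewrite leq_maxl.
have hC : (size C <= n)%N by rewrite leq_maxr.
have hBC : (size (B - C)%R <= n)%N.
  by rewrite (leq_trans (size_polyD _ _)) // size_polyN geq_max hB hC.
rewrite (dcomp_widen (leqnn _) hBC) (dcomp_widen (leqnn _) hB).
rewrite (dcomp_widen (leqnn _) hC) -sumrB; apply: eq_bigr => i _.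
rewrite -sumrB; apply: eq_bigr => j _; rewrite -sumrB; apply: eq_bigr => k _.
by rewrite /dcomp_term coefB (iter_morphB k derB) -scalerBl !mulrBr.
Qed.

(* Only the term i = m, j = n, k = 0 of the triple sum reaches degree m + n. *)
Lemma coef_dcomp_top (A B : {poly K}) m n :
  size A = m.+1 -> size B = n.+1 -> (dcomp der A B)`_(m + n) = A`_m * B`_n.
Proof.
move=> sA sB; rewrite /dcomp sA sB coef_sum big_ord_recr /=.
rewrite big1 ?add0r => [|i _]; last first.
  rewrite coef_sum big1 // => j _; rewrite coef_sum big1 // => k _.
  rewrite coefZ coefXn.
  have /negPf -> : (m + n)%N != (i - k + j)%N.
    by apply/eqP; have := ltn_ord i; have := ltn_ord j; have := ltn_ord k; lia.
  by rewrite mulr0.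
rewrite coef_sum big_ord_recr /= big1 ?add0r => [|j _]; last first.
  rewrite coef_sum big1 // => k _; rewrite coefZ coefXn.
  have /negPf -> : (m + n)%N != (m - k + j)%N.
    by apply/eqP; have := ltn_ord j; have := ltn_ord k; lia.
  by rewrite mulr0.
rewrite coef_sum big_ord_recl /= big1 ?addr0 => [|k _]; last first.
  rewrite coefZ coefXn.
  have /negPf -> : (m + n)%N != (m - bump 0 k + n)%N.
    by apply/eqP; have := ltn_ord k; rewrite /bump /=; lia.
  by rewrite mulr0.
by rewrite coefZ coefXn subn0 eqxx bin0 !mulr1.
Qed.

Lemma dcomp_neq0 (A B : {poly K}) : A != 0 -> B != 0 -> dcomp der A B != 0.
Proof.
move=> nA nB; apply/eqP => AB0.
have := coef_dcomp_top (polySpred nA) (polySpred nB).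
rewrite -!lead_coefE AB0 coef0 => /esym/eqP.
by rewrite mulf_eq0 !lead_coef_eq0 (negPf nA) (negPf nB).
Qed.

Lemma dcompIr (B A C : {poly K}) :
  B != 0 -> dcomp der A B = dcomp der C B -> A = C.
Proof.
move=> nB AB_CB; apply/subr0_eq/eqP; apply/negPn/negP => nAC.
by have := dcomp_neq0 nAC nB; rewrite dcompBl AB_CB subrr eqxx.
Qed.

Lemma dcompIl (A B C : {poly K}) :
  A != 0 -> dcomp der A B = dcomp der A C -> B = C.
Proof.
move=> nA AB_AC; apply/subr0_eq/eqP; apply/negPn/negP => nBC.
by have := dcomp_neq0 nA nBC; rewrite dcompBr AB_AC subrr eqxx.
Qed.

Lemma homog_of_degM (S1 S2 : {poly K}) d1 d2 :
  homog_of_deg S1 d1 -> homog_of_deg S2 d2 -> homog_of_deg (S1 * S2) (d1 + d2).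
Proof.
move=> [c1 nc1 ->] [c2 nc2 ->]; exists (c1 * c2); first exact: mulf_neq0.
by rewrite -scalerAl -scalerAr scalerA exprD.
Qed.

Lemma size_dsym_homog (P S : {poly K}) d :
  homog_of_deg S d -> dsym P = S -> size P = d.+1.
Proof.
move=> [c nc ->] /(congr1 (size : {poly K} -> nat)); rewrite /dsym.
have [->|nP] := eqVneq P 0.
  by rewrite lead_coef0 scale0r size_poly0 size_scale // size_polyXn.
rewrite !size_scale ?lead_coef_eq0 // !size_polyXn => -[<-].
by rewrite prednK // lt0n size_poly_eq0.
Qed.

Lemma ord_ltB_eq (A B : {poly K}) (t : int) :
  ord_lt (A - B) t -> t <= 0 -> A = B.
Proof.
case/orP=> [/eqP/subr0_eq //| sAB t_le0]; apply/subr0_eq/eqP.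
by rewrite -size_poly_eq0 -leqn0 -(lez_nat _ 0) (le_trans sAB).
Qed.

Lemma factorization_dcomp (L S1 S2 F1 F2 : {poly K}) :
  factorization der L S1 S2 F1 F2 -> L = dcomp der F1 F2.
Proof. by case=> _ _ _ /ord_ltB_eq; apply. Qed.

End Composition.

Theorem mainTheorem3 (K : fieldType) (der : K -> K) (Hder : is_derivation der)
    (L S1 S2 : {poly K}) (d1 d2 : nat) :
  homog_of_deg S1 d1 -> homog_of_deg S2 d2 -> dsym L = S1 * S2 ->
  forall F1 F2 : {poly K},
    partial_fact der L S1 S2 ((maxn d1 d2)%:Z - 1) F1 F2 ->
  forall G1 G2 H1 H2 : {poly K},
    factorization der L S1 S2 G1 G2 ->
    extension der L S1 S2 ((maxn d1 d2)%:Z - 1) F1 F2 0 G1 G2 ->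
    factorization der L S1 S2 H1 H2 ->
    extension der L S1 S2 ((maxn d1 d2)%:Z - 1) F1 F2 0 H1 H2 ->
    G1 = H1 /\ G2 = H2.
Proof.
move=> hS1 hS2 hL F1 F2 [_ dF1 dF2 _] G1 G2 H1 H2
  /factorization_dcomp LG [_ _ _ eG1 eG2] /factorization_dcomp LH [_ _ _ eH1 eH2].
have derB := derivation_morphB Hder.
have sF1 := size_dsym_homog hS1 dF1; have sF2 := size_dsym_homog hS2 dF2.
have sL := size_dsym_homog (homog_of_degM hS1 hS2) hL.
have nF1 : F1 != 0 by rewrite -size_poly_eq0 sF1.
have nF2 : F2 != 0 by rewrite -size_poly_eq0 sF2.
rewrite /ordz sL sF1 sF2 /= in eG1 eG2 eH1 eH2.
have [le21|lt12] := leqP d2 d1.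
- have tF2 : (maxn d1 d2)%:Z - 1 - ((d1 + d2)%N%:Z - d2%:Z) <= 0 :> int by lia.
  move: (ord_ltB_eq eG2 tF2) (ord_ltB_eq eH2 tF2) => eqG2 eqH2.
  rewrite -eqG2 -eqH2 in LG LH *; split=> //.
  by apply: (dcompIr derB nF2); rewrite -LG -LH.
- have tF1 : (maxn d1 d2)%:Z - 1 - ((d1 + d2)%N%:Z - d1%:Z) <= 0 :> int by lia.
  move: (ord_ltB_eq eG1 tF1) (ord_ltB_eq eH1 tF1) => eqG1 eqH1.
  rewrite -eqG1 -eqH1 in LG LH *; split=> //.
  by apply: (dcompIl derB nF1); rewrite -LG -LH.
Qed.
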